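(* Let $\mathcal K=\{\mathbf x\in\mathbb R^n : \mathbf k_i^T\mathbf x\ge 0,\ i=1,\dots,p\}$ be a polyhedral cone with non-empty topological interior, where each $\mathbf k_i$ has unit Euclidean length, and let $z_\infty$ be the inradius of $\mathcal K$. Define linear programs as follows. Problem $P_0$: maximize $z$ over $(\mathbf x,z)\in\mathbb R^n\times\mathbb R$ subject to $\mathbf k_i^T\mathbf x\ge z$ for all $i$ and $-1\le x_i\le 1$ for all $i=1,\dots,n$. Given Problem $P_\ell$, let $(\mathbf x_\ell,z_\ell)$ be an (arbitrarily chosen) optimal solution of $P_\ell$, let $\mathbf u_\ell=\mathbf x_\ell/\|\mathbf x_\ell\|$, and let Problem $P_{\ell+1}$ be Problem $P_\ell$ with the additional constraint $\mathbf u_\ell^T\mathbf x\le 1$. Let $w_\ell=z_\ell/\|\mathbf x_\ell\|$. Then \[ z_0\ge z_1\ge\cdots\ge z_\ell\ge\cdots\ge z_\infty, \] and for any nonnegative integers $m$ and $n'$ we have $z_m\ge z_\infty\ge w_{n'}$.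
   Context: $B_r(\mathbf x)=\{\mathbf y\in\mathbb R^n:\|\mathbf x-\mathbf y\|\le r\}$ denotes the closed ball, with $\|\cdot\|$ the Euclidean norm. The insphere of a polyhedral cone $\mathcal K$ is the largest ball contained in $\mathcal K$ whose center lies in $B_1(\mathbf 0)$, and the inradius is its radius. (For each $\ell$, problem $P_\ell$ has an optimal solution and $\|\mathbf x_\ell\|\ge 1$, so $\mathbf u_\ell$ is well defined.) *)

From HB Require Import structures.
From mathcomp Require Import all_boot all_order all_algebra.
From mathcomp Require Import reals.
Set Implicit Arguments. Unset Strict Implicit. Unset Printing Implicit Defensive.
Import Order.TTheory GRing.Theory Num.Theory.
Local Open Scope ring_scope.

Section Defs.
Variables (R : realType) (n p : nat).

Definition dot (u v : 'rV[R]_n) : R := \sum_(i < n) u 0 i * v 0 i.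
Definition enorm (v : 'rV[R]_n) : R := Num.sqrt (dot v v).

Definition in_cone (k : 'I_p -> 'rV[R]_n) (x : 'rV[R]_n) : Prop :=
  forall i, 0 <= dot (k i) x.

Definition ball_in_cone (k : 'I_p -> 'rV[R]_n) (c : 'rV[R]_n) (r : R) : Prop :=
  forall y, enorm (c - y) <= r -> in_cone k y.

Definition cone_has_interior (k : 'I_p -> 'rV[R]_n) : Prop :=
  exists c r, 0 < r /\ ball_in_cone k c r.

(* r is the inradius: the radius of the largest ball contained in K
   whose center lies in B_1(0). *)
Definition is_inradius (k : 'I_p -> 'rV[R]_n) (r : R) : Prop :=
  (exists c, enorm c <= 1 /\ ball_in_cone k c r) /\
  (forall c r', enorm c <= 1 -> ball_in_cone k c r' -> r' <= r).

Definition unitv (v : 'rV[R]_n) : 'rV[R]_n := (enorm v)^-1 *: v.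

(* Feasible set of problem P_l, where xs m is the chosen optimal x_m of P_m. *)
Definition lp_feasible (k : 'I_p -> 'rV[R]_n) (xs : nat -> 'rV[R]_n) (l : nat)
    (x : 'rV[R]_n) (z : R) : Prop :=
  (forall i, z <= dot (k i) x) /\
  (forall j, -1 <= x 0 j <= 1) /\
  (forall m, (m < l)%N -> dot (unitv (xs m)) x <= 1).

Definition lp_optimal (k : 'I_p -> 'rV[R]_n) (xs : nat -> 'rV[R]_n) (l : nat)
    (x : 'rV[R]_n) (z : R) : Prop :=
  lp_feasible k xs l x z /\
  (forall x' z', lp_feasible k xs l x' z' -> z' <= z).

End Defs.

From HB Require Import structures.
From mathcomp Require Import all_boot all_order all_algebra.
From mathcomp Require Import reals.
From mathcomp Require Import lra.
Import Order.TTheory GRing.Theory Num.Theory.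
Local Open Scope ring_scope.

(* Since every k_i is a unit vector, a ball B_r(c) with r >= 0 lies in K
   exactly when k_i^T c >= r for all i (Cauchy-Schwarz).  Hence a centre c in the unit
   ball with ball B_{z_oo}(c) in K gives a feasible point (c, z_oo) of every
   P_l, so z_l >= z_oo; and an optimal (x_l, z_l) gives the ball of radius
   w_l around u_l, so w_l <= z_oo.  The z_l decrease because P_{l+1} only
   adds a constraint to P_l. *)

Set Implicit Arguments.
Unset Strict Implicit.

Section Euclidean.
Variables (R : realType) (n : nat).
Implicit Types (u v w : 'rV[R]_n) (a : R).

Lemma dotC u v : dot u v = dot v u.
Proof. by apply: eq_bigr => i _; rewrite mulrC. Qed.

Lemma dotDr u v w : dot u (v + w) = dot u v + dot u w.
Proof. by rewrite /dot -big_split; apply: eq_bigr => i _; rewrite !mxE mulrDr. Qed.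

Lemma dotZr u v a : dot u (a *: v) = a * dot u v.
Proof. by rewrite /dot mulr_sumr; apply: eq_bigr => i _; rewrite !mxE mulrCA. Qed.

Lemma dotZl u v a : dot (a *: u) v = a * dot u v.
Proof. by rewrite dotC dotZr dotC. Qed.

Lemma dotBr u v w : dot u (v - w) = dot u v - dot u w.
Proof. by rewrite dotDr -scaleN1r dotZr mulN1r. Qed.

Lemma dotBl u v w : dot (u - v) w = dot u w - dot v w.
Proof. by rewrite dotC dotBr !(dotC w). Qed.

Lemma dot0r u : dot u 0 = 0.
Proof. by rewrite /dot big1 // => i _; rewrite mxE mulr0. Qed.

Lemma dot0l u : dot 0 u = 0.
Proof. by rewrite dotC dot0r. Qed.

Lemma dotvv_ge0 u : 0 <= dot u u.
Proof. by apply: sumr_ge0 => i _; rewrite -expr2 sqr_ge0. Qed.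

Lemma coord_sqr_le_dotvv u j : u 0 j ^+ 2 <= dot u u.
Proof.
rewrite /dot (bigD1 j) //= expr2 lerDl.
by apply: sumr_ge0 => i _; rewrite -expr2 sqr_ge0.
Qed.

Lemma dotvv_eq0 u : (dot u u == 0) = (u == 0).
Proof.
apply/idP/eqP => [|->]; last by rewrite dot0r.
rewrite psumr_eq0 => [/allP u0|i _]; last by rewrite -expr2 sqr_ge0.
apply/rowP => j; rewrite mxE.
by have := u0 j (mem_index_enum j); rewrite mulf_eq0 orbb => /eqP.
Qed.

Lemma enorm_ge0 u : 0 <= enorm u.
Proof. exact: sqrtr_ge0. Qed.

Lemma enorm_sqr u : enorm u ^+ 2 = dot u u.
Proof. by rewrite sqr_sqrtr // dotvv_ge0. Qed.

Lemma enorm_eq0 u : (enorm u == 0) = (u == 0).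
Proof. by rewrite -dotvv_eq0 -enorm_sqr sqrf_eq0. Qed.

Lemma enorm0 : enorm (0 : 'rV[R]_n) = 0.
Proof. by apply/eqP; rewrite enorm_eq0. Qed.

Lemma enormZ a u : enorm (a *: u) = `|a| * enorm u.
Proof. by rewrite /enorm dotZl dotZr mulrA -expr2 sqrtrM ?sqr_ge0 // sqrtr_sqr. Qed.

Lemma enorm_unitv u : u != 0 -> enorm (unitv u) = 1.
Proof.
rewrite -enorm_eq0 => u0; rewrite enormZ ger0_norm ?invr_ge0 ?enorm_ge0 //.
exact: mulVf.
Qed.

Lemma enorm_unitv_le1 u : enorm (unitv u) <= 1.
Proof.
have [->|u0] := eqVneq u 0; last by rewrite enorm_unitv.
by rewrite /unitv scaler0 enorm0.
Qed.

Lemma normr_coord_le_enorm u j : `|u 0 j| <= enorm u.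
Proof. by rewrite -sqrtr_sqr ler_sqrt ?dotvv_ge0 ?coord_sqr_le_dotvv. Qed.

(* The vector |v| u - |u| v has squared norm 2 |u| |v| (|u| |v| - u.v). *)
Lemma cauchy_schwarz u v : dot u v <= enorm u * enorm v.
Proof.
have [->|u0] := eqVneq u 0; first by rewrite dot0l enorm0 mul0r.
have [->|v0] := eqVneq v 0; first by rewrite dot0r enorm0 mulr0.
have uv_gt0 : 0 < enorm u * enorm v.
  by rewrite mulr_gt0 // lt0r enorm_eq0 ?u0 ?v0 enorm_ge0.
have := dotvv_ge0 (enorm v *: u - enorm u *: v).
rewrite !(dotBl, dotBr, dotZl, dotZr) -!enorm_sqr (dotC v u) => sq_ge0.
have : 0 <= (enorm u * enorm v) * (enorm u * enorm v - dot u v) by nra.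
by rewrite pmulr_rge0 // subr_ge0.
Qed.

Lemma dot_le1 u v : enorm u <= 1 -> enorm v <= 1 -> dot u v <= 1.
Proof.
move=> u1 v1; apply: le_trans (cauchy_schwarz u v) _.
by rewrite -(mulr1 1) ler_pM ?enorm_ge0.
Qed.

End Euclidean.

Section Cone.
Variables (R : realType) (n p : nat) (k : 'I_p -> 'rV[R]_n).
Hypothesis k_unit : forall i, enorm (k i) = 1.

Lemma dot_normal_le_enorm i v : dot (k i) v <= enorm v.
Proof. by rewrite -[leRHS]mul1r -(k_unit i) cauchy_schwarz. Qed.

Lemma ball_in_cone_dot_ge c r : 0 <= r -> ball_in_cone k c r ->
  forall i, r <= dot (k i) c.
Proof.
move=> r_ge0 cK i; have := cK (c - r *: k i).
rewrite opprB addrC subrK enormZ k_unit ger0_norm // mulr1.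
move=> /(_ (lexx r)) /(_ i).
by rewrite dotBr dotZr -enorm_sqr k_unit expr1n mulr1 subr_ge0.
Qed.

Lemma dot_ge_ball_in_cone c r : (forall i, r <= dot (k i) c) ->
  ball_in_cone k c r.
Proof.
move=> rc y cy i; have := dot_normal_le_enorm i (c - y); rewrite dotBr.
by move: (rc i) cy; lra.
Qed.

Lemma inradius_ge0 r : is_inradius k r -> 0 <= r.
Proof.
case=> _ /(_ 0 0); apply; first by rewrite enorm0.
by apply: dot_ge_ball_in_cone => i; rewrite dot0r.
Qed.

Lemma ratio_le_inradius r x z : is_inradius k r ->
  (forall i, z <= dot (k i) x) -> z / enorm x <= r.
Proof.
move=> r_in zx; have [_ rmax] := r_in.
have [->|x0] := eqVneq x 0; first by rewrite enorm0 invr0 mulr0 inradius_ge0.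
apply: (rmax (unitv x)); first by rewrite enorm_unitv.
apply: dot_ge_ball_in_cone => i.
by rewrite /unitv dotZr mulrC ler_wpM2l ?invr_ge0 ?enorm_ge0 ?zx.
Qed.

Variable xs : nat -> 'rV[R]_n.

Lemma lp_feasible_le l l' x z : (l <= l')%N ->
  lp_feasible k xs l' x z -> lp_feasible k xs l x z.
Proof.
move=> ll' [zx [xbox xcut]]; split; [|split] => // m ml.
by apply: xcut; apply: leq_trans ll'.
Qed.

Lemma lp_feasible_unit_ball l c z : enorm c <= 1 ->
  (forall i, z <= dot (k i) c) -> lp_feasible k xs l c z.
Proof.
move=> c1 zc; split; [|split] => // [j | m _].
  by rewrite -ler_norml (le_trans (normr_coord_le_enorm c j)).
exact: dot_le1 (enorm_unitv_le1 _) c1.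
Qed.

Lemma lp_optimal_le l l' x z x' z' : (l <= l')%N ->
  lp_optimal k xs l x z -> lp_optimal k xs l' x' z' -> z' <= z.
Proof. by move=> ll' [_ zmax] [x'z' _]; apply: zmax x' _ (lp_feasible_le ll' x'z'). Qed.

Lemma inradius_le_lp_optimal r l x z : is_inradius k r ->
  lp_optimal k xs l x z -> r <= z.
Proof.
move=> r_in [_ zmax]; have [[c [c1 cK]] _] := r_in.
apply: (zmax c); apply: lp_feasible_unit_ball c1 _.
exact: ball_in_cone_dot_ge (inradius_ge0 r_in) cK.
Qed.

End Cone.

Theorem proposition3 (R : realType) (n p : nat) (k : 'I_p -> 'rV[R]_n)
  (hk : forall i, enorm (k i) = 1)
  (hint : cone_has_interior k)
  (zinf : R) (hzinf : is_inradius k zinf)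
  (xs : nat -> 'rV[R]_n) (zs : nat -> R)
  (hopt : forall l, lp_optimal k xs l (xs l) (zs l)) :
  (forall l, zs l.+1 <= zs l) /\
  (forall l, zinf <= zs l) /\
  (forall m n' : nat, zinf <= zs m /\ zs n' / enorm (xs n') <= zinf).
Proof.
have zinf_le l : zinf <= zs l := inradius_le_lp_optimal hk hzinf (hopt l).
have w_le l : zs l / enorm (xs l) <= zinf :=
  ratio_le_inradius hk hzinf (hopt l).1.1.
split=> [l|]; first exact: lp_optimal_le (leqnSn l) (hopt l) (hopt l.+1).
by split=> // m n'; split.
Qed.
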